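(* Let $\gamma:\mathbb{Z}_{>0}\to(0,\infty)$ satisfy $\lim_{n\to\infty}\gamma(n)=0$, and let $\delta>0$, $\theta>0$. Consider the birth–death continuous-time Markov chain on $\mathbb{Z}_{\ge0}$ with transitions $0\to1$ at rate $\theta$, $n\to n+1$ at rate $n\gamma(n)$ for $n\ge1$, and $n\to n-1$ at rate $n\delta$ for $n\ge1$, and for $n\ge1$ let $T_n$ be the first hitting time of $0$ from $n$. Then for every $\epsilon\in(0,\delta)$ there is a constant $h(\epsilon)$, independent of $n$, such that for all $n\ge1$, $$\frac{\ln(n+1)}{\delta}\le\mathbb{E}[T_n]\le\frac{\ln n}{\delta-\epsilon}+h(\epsilon).$$ *)

From HB Require Import structures.
From mathcomp Require Import all_boot all_order all_algebra.
From mathcomp Require Import all_classical all_reals all_analysis.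
Set Implicit Arguments. Unset Strict Implicit. Unset Printing Implicit Defensive.
Import Order.TTheory GRing.Theory Num.Theory.
Local Open Scope ring_scope.

(* Birth-death chain on nat: 0 -> 1 at rate theta; for x >= 1,
   x -> x+1 at rate x * gamma x, x -> x-1 at rate x * delta.
   Only the chain killed at 0 matters for the hitting time of 0. *)
Section BD.
Variables (R : realType) (gamma : nat -> R) (delta : R).

Definition bd_rate (x : nat) : R := x%:R * gamma x + x%:R * delta.
Definition bd_pup (x : nat) : R := (x%:R * gamma x) / bd_rate x.
Definition bd_pdown (x : nat) : R := (x%:R * delta) / bd_rate x.

(* bd_occ n k y = P_n(X_k = y and X_j <> 0 for all j <= k),
   where X is the embedded jump chain started at n. *)
Fixpoint bd_occ (n k y : nat) {struct k} : R :=
  match k with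
  | 0 => (y == n)%:R
  | k'.+1 =>
      if y == 0%N then 0
      else (if y.-1 == 0%N then 0 else bd_occ n k' y.-1 * bd_pup y.-1)
           + bd_occ n k' y.+1 * bd_pdown y.+1
  end.

(* E[T_n] = E[ sum over the jumps before hitting 0 of the (exponential)
   holding times ] = sum_k sum_{y>=1} P_n(X_k = y, not yet at 0) / q(y).
   At step k the chain is in [n-k, n+k], so the inner sum is finite. *)
Definition bd_expected_hitting_time (n : nat) : \bar R :=
  (\sum_(0 <= k <oo) ((\sum_(1 <= y < n + k + 1) bd_occ n k y / bd_rate y)%:E))%E.
End BD.

(* For a test function f with f 0 = 0, the killed jump chain gives
   Dynkin's telescoping identity
     f n - E_n[f(X_K); K < T] = sum_(k < K) E_n[(f - P f)(X_k); k < T],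
   while E[T_n] = sum_k E_n[1/q(X_k); k < T], q being the total jump rate.  So a
   nonnegative f whose drift f - P f dominates 1/q bounds E[T_n] from above, and
   an f = O(1/q) whose drift is dominated by 1/q bounds it from below (the error
   term is then O(E_n[1/q(X_K); K < T]), which tends to 0 when E[T_n] is finite).
   For f = cumsum d the drift condition reads y (delta d y - gamma y d (y+1)) >= 1
   (resp. <= 1).  Beyond the point where gamma <= eps, d y = 1/((delta - eps) y)
   works, giving ln n / (delta - eps) + O(1); d y = 1/(delta y) for y <= n gives
   the lower bound ln (n+1) / delta. *)

From HB Require Import structures.
From mathcomp Require Import all_boot all_order all_algebra.
From mathcomp Require Import all_classical all_reals all_analysis.
From mathcomp Require Import ring lra zify.
Set Implicit Arguments.
Unset Strict Implicit.
Unset Printing Implicit Defensive.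

Import Order.TTheory GRing.Theory Num.Theory.
Import numFieldNormedType.Exports.
Local Open Scope classical_set_scope.
Local Open Scope ring_scope.

Lemma ln_le_sum_inv (R : realType) m :
  ln m.+1%:R <= \sum_(1 <= i < m.+1) (i%:R : R)^-1.
Proof.
elim: m => [|m IHm]; first by rewrite ln1 big_geq.
rewrite big_nat_recr //=.
have m1_gt0 : 0 < (m.+1%:R : R) by rewrite ltr0n.
have -> : (m.+2%:R : R) = m.+1%:R * (1 + m.+1%:R^-1).
  by rewrite mulrDr mulr1 mulfV ?gt_eqF // -natr1.
rewrite lnM ?posrE ?addr_gt0 ?invr_gt0 //.
have := @le_ln1Dx R m.+1%:R^-1; have := m1_gt0; rewrite -invr_gt0.
move: IHm; set s := \sum_(_ <= _ < _) _; set x := _^-1; lra.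
Qed.

Lemma sum_inv_le_1Dln (R : realType) m : (0 < m)%N ->
  \sum_(1 <= i < m.+1) (i%:R : R)^-1 <= 1 + ln m%:R.
Proof.
elim: m => [//|m IHm] _.
case: m IHm => [|m IHm]; first by rewrite big_nat1 invr1 ln1 addr0.
rewrite big_nat_recr //=.
suff ln_step : ln (m.+1%:R : R) + m.+2%:R^-1 <= ln m.+2%:R.
  by move: (IHm isT) ln_step; set s := \sum_(_ <= _ < _) _; set x := _^-1; lra.
have m2_gt0 : 0 < (m.+2%:R : R) by rewrite ltr0n.
have -> : (m.+1%:R : R) = m.+2%:R * (1 - m.+2%:R^-1).
  by rewrite mulrBr mulr1 mulfV ?gt_eqF // -(natr1 (R := R) m.+1) addrK.
have x_lt1 : (m.+2%:R : R)^-1 < 1 by rewrite invf_lt1 // ltr1n.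
rewrite lnM ?posrE ?subr_gt0 //.
have := @le_ln1Dx R (- m.+2%:R^-1).
move: x_lt1; set x := _^-1; lra.
Qed.

Lemma ubound_prefix (R : realType) (f : nat -> R) M :
  exists2 B, 1 <= B & forall y, (y < M)%N -> f y <= B.
Proof.
elim: M => [|M [B B1 fB]]; first by exists 1.
exists (Num.max B (f M)); first by rewrite le_max B1.
move=> y; rewrite ltnS leq_eqVlt => /orP[/eqP-> | /fB fyB].
  by rewrite le_max lexx orbT.
by rewrite le_max fyB.
Qed.

Lemma nneseries_ge_of_partial (R : realType) (a : nat -> R) (x c : R) :
  (forall k, 0 <= a k) ->
  (forall K, x <= \sum_(0 <= k < K) a k + c * a K) ->
  (x%:E <= \sum_(0 <= k <oo) (a k)%:E)%E.
Proof.
move=> a_ge0 x_le.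
have [/(nnseries_is_cvg a_ge0) cvg_a|] := ltP (\sum_(0 <= k <oo) (a k)%:E)%E +oo%E;
  last by rewrite leye_eq => /eqP->; rewrite leey.
have a_cvg0 := cvg_series_cvg_0 cvg_a.
have cvg_bound : (series a K + c * a K)%R @[K --> \oo] --> (limn (series a) + c * 0 : R).
  by apply: cvgD; [exact: cvg_a | exact: cvgMr].
rewrite (_ : (\sum_(0 <= k <oo) (a k)%:E)%E = limn (EFin \o series a)); last first.
  by congr (limn _); apply/funext => K; rewrite /= sumEFin.
rewrite EFin_lim // lee_fin -[leRHS]addr0 -(mulr0 c).
by apply: cvgr_to_ge cvg_bound _; apply: nearW.
Qed.

Definition cumsum {R : nmodType} (d : nat -> R) (y : nat) : R := \sum_(1 <= i < y.+1) d i.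

Section BirthDeath.
Variables (R : realType) (gamma : nat -> R) (delta : R).
Hypotheses (gamma_gt0 : forall y, (0 < y)%N -> 0 < gamma y) (delta_gt0 : 0 < delta).

Local Notation rate := (bd_rate gamma delta).
Local Notation pup := (bd_pup gamma delta).
Local Notation pdown := (bd_pdown gamma delta).
Local Notation occ := (bd_occ gamma delta).

Lemma bd_rate_gt0 y : (0 < y)%N -> 0 < rate y.
Proof. by move=> y_gt0; rewrite addr_gt0 // mulr_gt0 ?ltr0n ?gamma_gt0. Qed.

Lemma bd_pup_ge0 y : (0 < y)%N -> 0 <= pup y.
Proof.
by move=> y_gt0; rewrite divr_ge0 ?ltW ?bd_rate_gt0 // mulr_gt0 ?ltr0n ?gamma_gt0.
Qed.

Lemma bd_pdown_ge0 y : (0 < y)%N -> 0 <= pdown y.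
Proof. by move=> y_gt0; rewrite divr_ge0 ?ltW ?bd_rate_gt0 // mulr_gt0 ?ltr0n. Qed.

Lemma bd_occ_ge0 n k y : 0 <= occ n k y.
Proof.
elim: k y => [|k IHk] y /=; first by rewrite ler0n.
case: eqP => // _; rewrite addr_ge0 //; last by rewrite mulr_ge0 ?bd_pdown_ge0.
by case: (y.-1 =P 0%N) => // /eqP y1_neq0; rewrite mulr_ge0 ?bd_pup_ge0 ?lt0n.
Qed.

Lemma bd_occ_eq0 n k y : (n + k < y)%N -> occ n k y = 0.
Proof.
elim: k y => [|k IHk] y /=; first by rewrite addn0 => /gtn_eqF->.
move=> lt_nk_y; case: eqP => // _.
by rewrite !IHk ?mul0r ?addr0 ?if_same //; lia.
Qed.

(* With P the transition operator of the jump chain, [bd_drift f = f - P f]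
   and [bd_mean f n k = E_n[f(X_k); k < T]]. *)
Definition bd_drift (f : nat -> R) y := f y - pup y * f y.+1 - pdown y * f y.-1.

Definition bd_mean (f : nat -> R) n k := \sum_(1 <= y < n + k + 1) occ n k y * f y.

Lemma bd_meanE f n k N : (n + k < N)%N ->
  bd_mean f n k = \sum_(1 <= y < N) occ n k y * f y.
Proof.
move=> lt_nk_N; rewrite /bd_mean (@big_cat_nat _ _ _ (n + k + 1) 1 N) /= ?addn1 //.
rewrite -[LHS]addr0; congr (_ + _); apply/esym.
by rewrite big_nat_cond big1 // => y /andP[/andP[lt_nk_y _] _]; rewrite bd_occ_eq0 ?mul0r.
Qed.

Lemma bd_mean0 f n : (0 < n)%N -> bd_mean f n 0 = f n.
Proof.
move=> n_gt0; rewrite /bd_mean addn0 addn1 big_nat_recr //= eqxx mul1r.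
rewrite big_nat_cond big1 ?add0r // => y /andP[/andP[_ lt_y_n] _].
by rewrite ltn_eqF // mul0r.
Qed.

Lemma ler_bd_mean f g n k : (forall y, (0 < y)%N -> f y <= g y) ->
  bd_mean f n k <= bd_mean g n k.
Proof.
move=> le_fg; apply: ler_sum_nat => y /andP[y_gt0 _].
by rewrite ler_wpM2l ?bd_occ_ge0 ?le_fg.
Qed.

Lemma bd_mean_ge0 f n k : (forall y, (0 < y)%N -> 0 <= f y) -> 0 <= bd_mean f n k.
Proof.
move=> f_ge0; rewrite /bd_mean big_nat_cond sumr_ge0 // => y /andP[/andP[y_gt0 _] _].
by rewrite mulr_ge0 ?bd_occ_ge0 ?f_ge0.
Qed.

Lemma bd_mean_succ f n k : f 0%N = 0 ->
  bd_mean f n k.+1 =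
  bd_mean (fun y => pup y * f y.+1) n k + bd_mean (fun y => pdown y * f y.-1) n k.
Proof.
move=> f0; set N := (n + k).+1.
rewrite (@bd_meanE _ _ _ N.+1) ?addnS // big_add1 /=.
have up : \sum_(0 <= y < N) (if y == 0%N then 0 else occ n k y * pup y) * f y.+1
    = bd_mean (fun y => pup y * f y.+1) n k.
  rewrite big_ltn // mul0r add0r (@bd_meanE _ _ _ N) //.
  by apply: eq_big_nat => y /andP[y_gt0 _]; rewrite gtn_eqF // mulrA.
have down : \sum_(0 <= y < N) occ n k y.+2 * pdown y.+2 * f y.+1
    = bd_mean (fun y => pdown y * f y.-1) n k.
  rewrite (@bd_meanE _ _ _ N.+2) 1?ltnW // [RHS]big_ltn // f0 !mulr0 add0r.
  by rewrite !big_add1; apply: eq_bigr => y _; rewrite mulrA.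
by rewrite -up -down -big_split; apply: eq_bigr => y _; rewrite mulrDl.
Qed.

Lemma bd_mean_step f n k : f 0%N = 0 ->
  bd_mean f n k - bd_mean f n k.+1 = bd_mean (bd_drift f) n k.
Proof.
move=> f0; rewrite bd_mean_succ // /bd_mean opprD addrA -!sumrB.
by apply: eq_bigr => y _; rewrite /bd_drift; ring.
Qed.

Lemma bd_mean_telescope f n K : (0 < n)%N -> f 0%N = 0 ->
  f n - bd_mean f n K = \sum_(0 <= k < K) bd_mean (bd_drift f) n k.
Proof.
move=> n_gt0 f0; elim: K => [|K IHK]; first by rewrite bd_mean0 // subrr big_geq.
by rewrite big_nat_recr //= -IHK -bd_mean_step // addrA subrK.
Qed.

Local Notation holding n k := (bd_mean (fun y => (rate y)^-1) n k).

Let holding_ge0 n k : 0 <= holding n k.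
Proof. by apply: bd_mean_ge0 => y /bd_rate_gt0; rewrite invr_ge0 => /ltW. Qed.

Lemma bd_expected_hitting_time_le f n : (0 < n)%N -> f 0%N = 0 ->
  (forall y, (0 < y)%N -> 0 <= f y) ->
  (forall y, (0 < y)%N -> (rate y)^-1 <= bd_drift f y) ->
  (bd_expected_hitting_time gamma delta n <= (f n)%:E)%E.
Proof.
move=> n_gt0 f0 f_ge0 drift_ge.
have partial_le K : \sum_(0 <= k < K) holding n k <= f n.
  have : \sum_(0 <= k < K) holding n k <= \sum_(0 <= k < K) bd_mean (bd_drift f) n k.
    by apply: ler_sum_nat => k _; exact: ler_bd_mean.
  rewrite -bd_mean_telescope // => /le_trans; apply.
  by rewrite lerBlDr lerDl bd_mean_ge0.
apply: lime_le; first by apply: is_cvg_nneseries => k _ _; rewrite lee_fin holding_ge0.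
by apply: nearW => K; rewrite sumEFin lee_fin partial_le.
Qed.

Lemma bd_expected_hitting_time_ge f n c : (0 < n)%N -> f 0%N = 0 ->
  (forall y, (0 < y)%N -> f y <= c / rate y) ->
  (forall y, (0 < y)%N -> bd_drift f y <= (rate y)^-1) ->
  ((f n)%:E <= bd_expected_hitting_time gamma delta n)%E.
Proof.
move=> n_gt0 f0 f_le drift_le.
apply: (nneseries_ge_of_partial (c := c)) => [k|K]; first exact: holding_ge0.
have mean_le : bd_mean f n K <= c * holding n K.
  rewrite /bd_mean mulr_sumr; apply: ler_sum_nat => y /andP[y_gt0 _].
  by rewrite mulrCA ler_wpM2l ?bd_occ_ge0 ?f_le.
have : \sum_(0 <= k < K) bd_mean (bd_drift f) n k <= \sum_(0 <= k < K) holding n k.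
  by apply: ler_sum_nat => k _; exact: ler_bd_mean.
rewrite -bd_mean_telescope //; move: mean_le.
set m := bd_mean f n K; set ch := c * _; set s := \sum_(_ <= _ < _) _; lra.
Qed.

Lemma bd_drift_cumsum d y : (0 < y)%N ->
  bd_drift (cumsum d) y = y%:R * (delta * d y - gamma y * d y.+1) / rate y.
Proof.
case: y => // y _; have := @bd_rate_gt0 y.+1 isT.
rewrite /bd_drift /bd_pup /bd_pdown /cumsum /=.
rewrite (big_nat_recr y.+2) // (big_nat_recr y.+1) //= /bd_rate.
by move=> rate_gt0; field; rewrite nat1r gt_eqF.
Qed.

Lemma bd_expected_hitting_time_le_cumsum d n : (0 < n)%N ->
  (forall y, (0 < y)%N -> 0 <= d y) ->
  (forall y, (0 < y)%N -> 1 <= y%:R * (delta * d y - gamma y * d y.+1)) ->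
  (bd_expected_hitting_time gamma delta n <= (cumsum d n)%:E)%E.
Proof.
move=> n_gt0 d_ge0 drift_ge; apply: bd_expected_hitting_time_le => //.
- by rewrite /cumsum big_geq.
- by move=> y _; rewrite /cumsum big_nat_cond sumr_ge0 // => i /andP[/andP[/d_ge0]].
- move=> y y_gt0; rewrite bd_drift_cumsum // -[leLHS]mul1r.
  by rewrite ler_pM2r ?invr_gt0 ?bd_rate_gt0 ?drift_ge.
Qed.

Lemma bd_expected_hitting_time_ge_cumsum d n c : (0 < n)%N ->
  (forall y, (0 < y)%N -> cumsum d y <= c / rate y) ->
  (forall y, (0 < y)%N -> y%:R * (delta * d y - gamma y * d y.+1) <= 1) ->
  ((cumsum d n)%:E <= bd_expected_hitting_time gamma delta n)%E.
Proof.
move=> n_gt0 cumsum_le drift_le; apply: (bd_expected_hitting_time_ge (c := c)) => //.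
- by rewrite /cumsum big_geq.
- move=> y y_gt0; rewrite bd_drift_cumsum // -[leRHS]mul1r.
  by rewrite ler_pM2r ?invr_gt0 ?bd_rate_gt0 ?drift_le.
Qed.

Section UpperTestFunction.
Variables (eps Gamma : R) (M : nat).
Hypotheses (eps_lt_delta : eps < delta) (Gamma_ge0 : 0 <= Gamma).
Hypotheses (gamma_head : forall y, (y < M)%N -> gamma y <= Gamma)
  (gamma_tail : forall y, (M <= y)%N -> gamma y <= eps).

Let A := (delta - eps)^-1.
Let lam := (1 + Gamma) / delta + 1.
Let B := A + 1.
(* [A / y] solves the drift inequality wherever [gamma <= eps]; below [M], where
   only [gamma <= Gamma] is known, a geometric profile of ratio [lam] takes over. *)
Let d_init y := if (y < M)%N then B * lam ^+ (M - y) else 0.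
Let d y := if (y < M)%N then B * lam ^+ (M - y) else A / y%:R.

Let A_gt0 : 0 < A. Proof. by rewrite invr_gt0 subr_gt0. Qed.
Let B_ge1 : 1 <= B. Proof. by rewrite lerDr ltW. Qed.
Let lam_ge1 : 1 <= lam. Proof. by rewrite /lam lerDr divr_ge0 ?addr_ge0 ?ler01 // ltW. Qed.
Let geom_ge0 k : 0 <= B * lam ^+ k.
Proof.
have B_ge0 := le_trans ler01 B_ge1; have lam_ge0 := le_trans ler01 lam_ge1.
by rewrite mulr_ge0 ?exprn_ge0.
Qed.

Let d_init_ge0 y : 0 <= d_init y.
Proof. by rewrite /d_init; case: ifP => _; [exact: geom_ge0 | exact: lexx]. Qed.

Let d_ge0 y : 0 <= d y.
Proof.
rewrite /d; case: ifP => _; first exact: geom_ge0.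
by rewrite divr_ge0 ?ler0n ?ltW.
Qed.

Let d_le y : (0 < y)%N -> d y <= d_init y + A / y%:R.
Proof.
move=> y_gt0; rewrite /d /d_init; case: ifP => _; last by rewrite add0r.
by rewrite lerDl divr_ge0 ?ler0n ?ltW.
Qed.

Let d_drift_below y : (0 < y < M)%N -> 1 <= delta * d y - gamma y * d y.+1.
Proof.
move=> /andP[y_gt0 lt_yM]; set P := lam ^+ (M - y.+1).
have P_ge1 : 1 <= P by rewrite exprn_ege1.
have dy : d y = lam * (B * P) by rewrite /d lt_yM -(subnSK lt_yM) exprS mulrCA.
have dS_le : d y.+1 <= B * P.
  rewrite /d /P; case: ltnP => [//|le_My1].
  have -> : (M - y.+1 = 0)%N by lia.
  rewrite expr0 mulr1; apply: (@le_trans _ _ A); last by rewrite lerDl.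
  by rewrite ler_pdivrMr ?ltr0n // ler_peMr ?ler1n // ltW.
have gamma_dS : gamma y * d y.+1 <= Gamma * (B * P).
  by apply: ler_pM; [exact/ltW/gamma_gt0 | exact: d_ge0 | exact: gamma_head |].
have delta_lam : delta * lam = 1 + Gamma + delta.
  by rewrite /lam mulrDr mulr1 mulrCA mulfV ?gt_eqF // mulr1.
have BP_ge1 : 1 <= B * P by rewrite mulr_ege1.
rewrite dy mulrA delta_lam; move: gamma_dS BP_ge1 (ltW delta_gt0).
set BP := B * P; set gd := gamma y * _; nra.
Qed.

Let d_drift_above y : (M <= y)%N -> (0 < y)%N -> 1 <= y%:R * (delta * d y - gamma y * d y.+1).
Proof.
move=> le_My y_gt0; rewrite /d ltnNge le_My ltnNge (leqW le_My) /=.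
have y_pos : (0 : R) < y%:R by rewrite ltr0n.
have gamma_dS : gamma y * (A / y.+1%:R) <= eps * (A / y%:R).
  apply: ler_pM; [exact/ltW/gamma_gt0 | by rewrite divr_ge0 ?ler0n ?ltW | exact: gamma_tail |].
  by rewrite ler_pM2l // lef_pV2 ?posrE ?ltr0n // ler_nat.
rewrite (le_trans _ (ler_wpM2l (ler0n _ _) (lerB (lexx _) gamma_dS))) //.
have -> : y%:R * (delta * (A / y%:R) - eps * (A / y%:R)) = A * (delta - eps).
  by field; rewrite gt_eqF.
by rewrite mulVf // gt_eqF // subr_gt0.
Qed.

Lemma bd_expected_hitting_time_le_ln :
  exists h, forall n, (0 < n)%N ->
    (bd_expected_hitting_time gamma delta n <= (ln n%:R / (delta - eps) + h)%:E)%E.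
Proof.
exists (\sum_(1 <= i < M) d_init i + A) => n n_gt0.
have drift y : (0 < y)%N -> 1 <= y%:R * (delta * d y - gamma y * d y.+1).
  move=> y_gt0; case: (ltnP y M) => [lt_yM|le_My]; last exact: d_drift_above.
  by rewrite mulr_ege1 ?ler1n ?d_drift_below ?y_gt0.
apply: le_trans (bd_expected_hitting_time_le_cumsum n_gt0 (fun y _ => d_ge0 y) drift) _.
rewrite lee_fin.
have init_le : \sum_(1 <= i < n.+1) d_init i <= \sum_(1 <= i < M) d_init i.
  rewrite (@big_nat_widen _ _ _ 1 M (n.+1 + M)) ?leq_addl // [leRHS]big_mkcond /=.
  rewrite [leRHS](eq_bigr d_init) => [|i _]; last by rewrite /d_init; case: (i < M)%N.
  exact: (@nondecreasing_series _ d_init xpredT 1 (fun k _ _ => d_init_ge0 k) _ _ (leq_addr M n.+1)).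
have harmonic_le : A * \sum_(1 <= i < n.+1) i%:R^-1 <= A + ln n%:R * A.
  by rewrite (mulrC (ln _)) -[A in A + _]mulr1 -mulrDr ler_pM2l // sum_inv_le_1Dln.
have cumsum_le : cumsum d n <=
    \sum_(1 <= i < n.+1) d_init i + A * \sum_(1 <= i < n.+1) i%:R^-1.
  rewrite /cumsum mulr_sumr -big_split; apply: ler_sum_nat => i /andP[i_gt0 _].
  exact: d_le.
move: cumsum_le init_le harmonic_le; rewrite -/A.
set s := \sum_(_ <= _ < n.+1) d_init _; set s' := \sum_(_ <= _ < M) d_init _.
set H := A * _; set L := ln _ * _.
lra.
Qed.

End UpperTestFunction.

Section LowerTestFunction.
Variables (n M : nat).
Hypotheses (n_gt0 : (0 < n)%N) (n_lt_M : (n < M)%N).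
Hypothesis gamma_tail : forall y, (M <= y)%N -> gamma y <= delta.

(* The steepest descent allowed by the drift inequality at [M] is [c], since
   [M * gamma M * c = 1]; the negative tail makes [cumsum d] eventually
   nonpositive, hence [O(1 / rate)]. *)
Let c := (M%:R * gamma M)^-1.
Let d y := if (y <= n)%N then (y%:R * delta)^-1 else if (y <= M)%N then 0 else - c.

Let M_gt0 : (0 < M)%N. Proof. exact: leq_ltn_trans (leq0n n) n_lt_M. Qed.
Let c_gt0 : 0 < c. Proof. by rewrite invr_gt0 mulr_gt0 ?ltr0n ?gamma_gt0. Qed.

Let d_head y : (y <= n)%N -> d y = (y%:R * delta)^-1.
Proof. by rewrite /d => ->. Qed.

Let d_mid y : (n < y <= M)%N -> d y = 0.
Proof. by rewrite /d => /andP[/ltn_geF-> ->]. Qed.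

Let d_tail y : (M < y)%N -> d y = - c.
Proof. by move=> lt_My; rewrite /d ltn_geF ?(ltn_trans n_lt_M) // ltn_geF. Qed.

Let d_ge0 y : (y <= M)%N -> 0 <= d y.
Proof.
move=> le_yM; have [le_yn|lt_ny] := leqP y n.
  by rewrite d_head // invr_ge0 mulr_ge0 ?ler0n ?ltW.
by rewrite d_mid // lt_ny le_yM.
Qed.

Let d_drift y : (0 < y)%N -> y%:R * (delta * d y - gamma y * d y.+1) <= 1.
Proof.
move=> y_gt0; have gamma_ge0 := ltW (gamma_gt0 y_gt0).
have y_pos : (0 : R) < y%:R by rewrite ltr0n.
have [le_yn|lt_ny] := leqP y n.
  have dS_ge0 : 0 <= d y.+1 by rewrite d_ge0 // (leq_ltn_trans le_yn n_lt_M).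
  rewrite d_head // mulrBr mulrA mulfV ?gt_eqF ?mulr_gt0 // lerBlDr lerDl.
  by rewrite !mulr_ge0 // ltW.
have [lt_yM|] := ltnP y M.
  have mid_y : (n < y <= M)%N by rewrite lt_ny ltnW.
  have mid_y1 : (n < y.+1 <= M)%N by rewrite lt_yM ltnS ltnW.
  by rewrite !d_mid // !mulr0 subrr mulr0 ler01.
rewrite leq_eqVlt => /orP[/eqP eq_My|lt_My].
  rewrite -eq_My d_mid ?n_lt_M ?leqnn // d_tail // mulr0 sub0r !mulrN opprK mulrA.
  by rewrite mulfV // gt_eqF // mulr_gt0 ?ltr0n ?gamma_gt0.
have gamma_y : gamma y <= delta by rewrite gamma_tail // ltnW.
rewrite (d_tail lt_My) (d_tail (leqW lt_My)).
have -> : delta * - c - gamma y * - c = - ((delta - gamma y) * c) by ring.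
apply: le_trans ler01; rewrite mulrN oppr_le0.
by apply: mulr_ge0 (ler0n _ _) (mulr_ge0 _ (ltW c_gt0)); rewrite subr_ge0.
Qed.

Let cumsum_d_n : cumsum d n = (\sum_(1 <= i < n.+1) (i%:R)^-1) / delta.
Proof.
rewrite /cumsum mulr_suml; apply: eq_big_nat => i /andP[_ lt_in].
by rewrite d_head ?invfM // -ltnS.
Qed.

Let cumsum_d_tail y : (M <= y)%N -> cumsum d y = cumsum d M - c * (y - M)%:R.
Proof.
move=> le_My; rewrite /cumsum (@big_cat_nat _ _ _ M.+1 1 y.+1) //= ?ltnS //.
congr (_ + _); rewrite (eq_big_nat _ _ (F2 := fun=> - c)) => [|i /andP[lt_Mi _]].
  by rewrite sumr_const_nat subSS mulNrn mulr_natr.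
exact: d_tail.
Qed.

Let cumsum_d_eventually_le0 : exists Y, forall y, (Y <= y)%N -> cumsum d y <= 0.
Proof.
have cumsum_M_ge0 : 0 <= cumsum d M.
  by rewrite /cumsum big_nat_cond sumr_ge0 // => i /andP[/andP[_ le_iM] _]; exact: d_ge0.
set Z := Num.bound (cumsum d M / c).
have : cumsum d M / c < Z%:R by rewrite archi_boundP // divr_ge0 // ltW.
rewrite ltr_pdivrMr // mulrC => lt_cZ.
exists (M + Z)%N => y le_y; have le_My : (M <= y)%N by lia.
by rewrite cumsum_d_tail // subr_le0 (le_trans (ltW lt_cZ)) // ler_pM2l // ler_nat; lia.
Qed.

Let cumsum_d_le : exists c', forall y, (0 < y)%N -> cumsum d y <= c' / rate y.
Proof.
have [Y cumsum_le0] := cumsum_d_eventually_le0.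
have [B B_ge1 B_bound] := ubound_prefix (fun y => cumsum d y * rate y) Y.
exists B => y y_gt0; have rate_gt0 := bd_rate_gt0 y_gt0.
have [lt_yY|le_Yy] := ltnP y Y.
  by rewrite ler_pdivlMr // B_bound.
by rewrite (le_trans (cumsum_le0 _ le_Yy)) // divr_ge0 ?ltW // (lt_le_trans ltr01).
Qed.

Lemma ln_le_bd_expected_hitting_time :
  ((ln n.+1%:R / delta)%:E <= bd_expected_hitting_time gamma delta n)%E.
Proof.
have [c' cumsum_le] := cumsum_d_le.
apply: le_trans (bd_expected_hitting_time_ge_cumsum n_gt0 cumsum_le d_drift).
by rewrite cumsum_d_n lee_fin ler_pM2r ?invr_gt0 // ln_le_sum_inv.
Qed.

End LowerTestFunction.

End BirthDeath.

Theorem claim6 (R : realType) (gamma : nat -> R) (delta theta : R)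
  (gamma_pos : forall n : nat, (0 < n)%N -> 0 < gamma n)
  (gamma_lim : gamma n @[n --> \oo] --> 0)
  (delta_pos : 0 < delta) (theta_pos : 0 < theta) :
  forall eps : R, 0 < eps -> eps < delta ->
  exists h : R, forall n : nat, (1 <= n)%N ->
    ((ln (n.+1)%:R / delta)%:E <= bd_expected_hitting_time gamma delta n)%E /\
    (bd_expected_hitting_time gamma delta n <= (ln (n%:R) / (delta - eps) + h)%:E)%E.
Proof.
move=> eps eps_gt0 eps_lt_delta.
have [M _ gamma_le_eps] := cvgr_le _ gamma_lim _ eps_gt0.
have [M' _ gamma_le_delta] := cvgr_le _ gamma_lim _ delta_pos.
have [Gamma Gamma_ge1 gamma_head] := ubound_prefix gamma M.
have [h upper] := bd_expected_hitting_time_le_ln gamma_pos delta_pos eps_lt_delta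
  (le_trans ler01 Gamma_ge1) gamma_head gamma_le_eps.
exists h => n n_gt0; split; last exact: upper.
have n_lt_M : (n < maxn M' n.+1)%N by rewrite leq_max ltnSn orbT.
apply: (ln_le_bd_expected_hitting_time gamma_pos delta_pos n_gt0 n_lt_M).
by move=> y /(leq_trans (leq_maxl _ _)); apply: gamma_le_delta.
Qed.
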